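(* Let $\mathcal{A}=\{\alpha_1<\dots<\alpha_m\}\subset(0,1)$, $d_{\mathcal{A}}=\min_{\alpha\in\mathcal{A}}\min(\alpha,1-\alpha)$. Suppose the base forecasts are point forecasts, $b_t=[k_t,\dots,k_t]$ for some $k_t\in\mathbb{R}$, and $|y_t-k_t|\le R$ for all $t$. Then for every $\alpha\in\mathcal{A}$ and $T\ge1$, the MultiQT iterates (learning rate $\eta>0$, initial hidden offset $\tilde\theta_1\in\mathcal{K}$) satisfy $$\Bigg|\frac1T\sum_{t=1}^T\mathrm{cov}_t^{\alpha}-\alpha\Bigg|\le\frac{2\|\tilde\theta_1\|_2}{\eta T}+\frac{|\mathcal{A}|^{1/2}}{T}+\frac{|\mathcal{A}|^{3/2}}{2d_{\mathcal{A}}T}+\frac{R|\mathcal{A}|^{3/2}}{d_{\mathcal{A}}\eta T}+\frac{|\mathcal{A}|^{3/2}}{T\sqrt3}.$$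
   Context: $\mathcal{K}=\{x\in\mathbb{R}^m:x_1\le\dots\le x_m\}$; $\Pi_C$ Euclidean projection; $C-v=\{x-v:x\in C\}$. MultiQT: for $t=1,2,\dots$, $\theta_t=\Pi_{\mathcal{K}-b_t}(\tilde\theta_t)$, forecast $q_t=b_t+\theta_t$, $\mathrm{cov}_t^{\alpha}=\mathbb{1}\{y_t\le q_t^{\alpha}\}$, and $\tilde\theta_{t+1}^{\alpha}=\tilde\theta_t^{\alpha}-\eta(\mathrm{cov}_t^{\alpha}-\alpha)$ for each $\alpha\in\mathcal{A}$. *)

From HB Require Import structures.
From mathcomp Require Import all_boot all_order all_algebra.
From mathcomp Require Import reals.
Set Implicit Arguments. Unset Strict Implicit. Unset Printing Implicit Defensive.
Import Order.TTheory GRing.Theory Num.Theory.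
Local Open Scope ring_scope.

Definition isoK (R : realType) (m : nat) (x : 'I_m -> R) : Prop :=
  forall i j : 'I_m, (i <= j)%N -> x i <= x j.

(* The shifted set K - v = {x - v : x in K} = {z : z + v in K}. *)
Definition shiftK (R : realType) (m : nat) (v : 'I_m -> R) (z : 'I_m -> R) : Prop :=
  isoK (fun i => z i + v i).

Definition norm2 (R : realType) (m : nat) (x : 'I_m -> R) : R :=
  Num.sqrt (\sum_(i < m) x i ^+ 2).

Definition is_proj (R : realType) (m : nat) (C : ('I_m -> R) -> Prop)
  (z p : 'I_m -> R) : Prop :=
  C p /\ forall x, C x -> norm2 (fun i => p i - z i) <= norm2 (fun i => x i - z i).

(* d_A = min_alpha min(alpha, 1 - alpha) (1 is a harmless neutral element,
   all terms are <= 1/2). *)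
Definition dA (R : realType) (m : nat) (alpha : 'I_m -> R) : R :=
  \big[Num.min/1]_(i < m) Num.min (alpha i) (1 - alpha i).

Definition ind_le (R : realType) (y q : R) : R := if y <= q then 1 else 0.

From HB Require Import structures.
From mathcomp Require Import all_boot all_order all_algebra.
From mathcomp Require Import reals ring lra zify.
Set Implicit Arguments. Unset Strict Implicit. Unset Printing Implicit Defensive.
Import Order.TTheory GRing.Theory Num.Theory.
Local Open Scope ring_scope.

(* Since b_t is a constant vector, theta_t is the Euclidean projection of
   thtil_t onto the isotonic cone K.  Two local facts about that projection
   drive the argument: a coordinate of the projection is at least any value
   below all later input coordinates (and dually), and at a strict jump
   theta^a < theta^(a+1) the input satisfies thtil^a <= theta^a and
   theta^(a+1) <= thtil^(a+1).  The jump fact keeps every adjacent gap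
   thtil_t^a - thtil_t^(a+1) below eta, because the only update that widens a
   gap (cov^a = 0, cov^(a+1) = 1) forces a jump; with the first fact this keeps
   theta_t within eta (m - 1) of thtil_t.  Hence a coordinate only moves
   towards y_t - k_t once it is far from it, so |thtil_t^i| stays below
   |thtil_1^i| + R + eta m.  Telescoping the update gives
   eta sum_t (cov_t^i - alpha_i) = thtil_1^i - thtil_(T+1)^i, so the coverage
   error is at most (2 |thtil_1^i| + R + eta m) / (eta T), which is below the
   stated bound since d_A <= 1/2 and m >= 1. *)

Section IsotonicProjection.
Variables (R : realType) (m : nat).
Implicit Types (i j a b : 'I_m) (u th x z : 'I_m -> R).
Implicit Types (C : ('I_m -> R) -> Prop).

Lemma isoK_shiftK_const c x : shiftK (fun _ => c) x <-> isoK x.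
Proof. by split=> iso i j ij; have := iso i j ij; rewrite lerD2r. Qed.

Lemma is_proj_shiftK_const c u th :
  is_proj (shiftK (fun _ => c)) u th -> is_proj (@isoK R m) u th.
Proof.
case=> /isoK_shiftK_const isoth thmin; split=> // x isox.
exact/thmin/isoK_shiftK_const.
Qed.

Lemma eq_norm2 x z : x =1 z -> norm2 x = norm2 z.
Proof.
move=> eqxz; rewrite /norm2; congr Num.sqrt.
by apply: eq_bigr => j _; rewrite eqxz.
Qed.

Lemma is_proj_coordwise_min C u th x : is_proj C u th -> C x ->
  (forall j, (x j - u j) ^+ 2 <= (th j - u j) ^+ 2) ->
  forall i, (th i - u i) ^+ 2 <= (x i - u i) ^+ 2.
Proof.
case=> _ thmin Cx closer i; rewrite leNgt; apply/negP => lti.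
have := thmin x Cx; rewrite /norm2 ler_sqrt; last first.
  by apply: sumr_ge0 => j _; exact: sqr_ge0.
apply/negP; rewrite -ltNge (bigD1 i) //= [X in _ < X](bigD1 i) //=.
by apply: ltr_leD => //; apply: ler_sum => j _.
Qed.

Lemma proj_isoK_lbound u th i mu : is_proj (@isoK R m) u th ->
  (forall j, (i <= j)%N -> mu <= u j) -> mu <= th i.
Proof.
move=> P ge_mu; have isoth := P.1.
rewrite leNgt; apply/negP => lt_i.
pose x j := if (i <= j)%N && (th j < mu) then mu else th j.
have isox : isoK x.
  move=> a b ab; have := isoth a b ab; rewrite /x.
  case: ifP => [/andP[ia ta]|_]; case: ifP => [/andP[ib tb]|/negbT] //.
  - by rewrite (leq_trans ia ab) /= -leNgt.
  - by move=> thab; apply/ltW/(le_lt_trans thab).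
have closer j : (x j - u j) ^+ 2 <= (th j - u j) ^+ 2.
  rewrite /x; case: ifP => [/andP[ij tj]|_] //.
  by have := ge_mu j ij; nra.
have := is_proj_coordwise_min P isox closer i; rewrite /x leqnn lt_i /=.
by have := ge_mu i (leqnn _); nra.
Qed.

Lemma proj_isoK_jumpl u th a b : is_proj (@isoK R m) u th ->
  b = a.+1 :> nat -> th a < th b -> u a <= th a.
Proof.
move=> P eb ltab; have isoth := P.1.
rewrite leNgt; apply/negP => lt_a.
have [tau [lt_tau tau_ua tau_b]] :
    exists tau, [/\ th a < tau, tau <= u a & tau <= th b].
  by exists (Num.min (u a) (th b)); rewrite lt_min lt_a ltab !ge_min !lexx orbT.
pose x j := if j == a then tau else th j.
have isox : isoK x.
  move=> j j' jj'; rewrite /x.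
  have [ej|ja] := eqVneq j a; have [ej'|j'a] := eqVneq j' a => //.
  - have bj' : (b <= j')%N by rewrite eb ltn_neqAle -ej jj' andbT eq_sym ej.
    exact: le_trans tau_b (isoth _ _ bj').
  - by rewrite ej' in jj'; apply/ltW/(le_lt_trans (isoth _ _ jj')).
  - exact: isoth.
have closer j : (x j - u j) ^+ 2 <= (th j - u j) ^+ 2.
  by rewrite /x; case: eqP => [->|_] //; nra.
by have := is_proj_coordwise_min P isox closer a; rewrite /x eqxx; nra.
Qed.

(* An isometry mapping K onto K that reverses the order of the coordinates:
   it turns the lower-side facts above into their upper-side duals. *)
Definition revN x j := - x (rev_ord j).

Lemma revNK x j : revN (revN x) j = x j.
Proof. by rewrite /revN rev_ordK opprK. Qed.

Lemma isoK_revN x : isoK x -> isoK (revN x).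
Proof. by move=> isox a b ab; rewrite /revN lerN2; apply/isox/leq_sub2l. Qed.

Lemma norm2_revN x : norm2 (revN x) = norm2 x.
Proof.
rewrite /norm2 (reindex_inj rev_ord_inj); congr Num.sqrt.
by apply: eq_bigr => j _; rewrite /revN rev_ordK sqrrN.
Qed.

Lemma norm2_revNB x z :
  norm2 (fun j => revN x j - revN z j) = norm2 (fun j => x j - z j).
Proof.
rewrite -[RHS]norm2_revN; apply: eq_norm2 => j.
by rewrite /revN opprB opprK addrC.
Qed.

Lemma is_proj_revN u th : is_proj (@isoK R m) u th ->
  is_proj (@isoK R m) (revN u) (revN th).
Proof.
case=> isoth thmin; split=> [|x isox]; first exact: isoK_revN.
have -> : norm2 (fun j => x j - revN u j) = norm2 (fun j => revN x j - u j).
  by rewrite -norm2_revNB; apply: eq_norm2 => j; rewrite revNK.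
by rewrite norm2_revNB; apply/thmin/isoK_revN.
Qed.

Lemma proj_isoK_ubound u th i mu : is_proj (@isoK R m) u th ->
  (forall j, (j <= i)%N -> u j <= mu) -> th i <= mu.
Proof.
move=> P le_mu.
have := proj_isoK_lbound (i := rev_ord i) (mu := - mu) (is_proj_revN P).
rewrite /revN rev_ordK lerN2; apply=> j ij; rewrite lerN2; apply: le_mu.
by move: ij (ltn_ord i) (ltn_ord j) => /=; lia.
Qed.

Lemma proj_isoK_jumpr u th a b : is_proj (@isoK R m) u th ->
  b = a.+1 :> nat -> th a < th b -> th b <= u b.
Proof.
move=> P eb ltab.
have := proj_isoK_jumpl (a := rev_ord b) (b := rev_ord a) (is_proj_revN P).
rewrite /revN !rev_ordK !lerN2 ltrN2; apply=> //=.
by move: (ltn_ord b); rewrite eb; lia.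
Qed.

Lemma adjacent_gap_drop_le u c :
  (forall a b, b = a.+1 :> nat -> u a - u b <= c) -> 0 <= c ->
  forall a b, (a <= b)%N -> u a - u b <= c * m.-1%:R.
Proof.
move=> gap c0 a b ab.
have drop n a' b' : b' = (a' + n)%N :> nat -> u a' - u b' <= c * n%:R.
  elim: n b' => [|n IH] b' eb.
    have -> : b' = a' by apply: val_inj; rewrite /= eb addn0.
    by rewrite subrr mulr0.
  have lt : (a' + n < m)%N by move: (ltn_ord b'); rewrite eb addnS => /ltnW.
  have := IH (Ordinal lt) erefl; have := gap (Ordinal lt) b'.
  by rewrite eb addnS -[n.+1]addn1 natrD mulrDr mulr1 => /(_ erefl); lra.
apply: le_trans (drop (b - a)%N a b _) _; first by rewrite subnKC.
by apply: ler_wpM2l => //; rewrite ler_nat; move: (ltn_ord b); lia.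
Qed.

End IsotonicProjection.

Section MultiQT.
Variables (R : realType) (m : nat) (alpha : 'I_m -> R) (eta Rb : R).
Variables (k y : nat -> R) (thtil theta : nat -> 'I_m -> R).
Local Notation cov t i := (ind_le (y t) (k t + theta t i)).
Hypothesis alpha_mono : forall a b : 'I_m, (a < b)%N -> alpha a <= alpha b.
Hypothesis alpha01 : forall i, 0 <= alpha i <= 1.
Hypothesis eta_gt0 : 0 < eta.
Hypothesis isoK_thtil1 : isoK (thtil 1).
Hypothesis yk_le : forall t, (1 <= t)%N -> `|y t - k t| <= Rb.
Hypothesis proj_theta :
  forall t, (1 <= t)%N -> is_proj (@isoK R m) (thtil t) (theta t).
Hypothesis thtil_next : forall t, (1 <= t)%N -> forall i,
  thtil t.+1 i = thtil t i - eta * (cov t i - alpha i).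

Lemma thtil_gap t : (1 <= t)%N ->
  forall a b : 'I_m, b = a.+1 :> nat -> thtil t a - thtil t b <= eta.
Proof.
elim: t => [//|[|t] IH] _ a b eb.
  rewrite (le_trans _ (ltW eta_gt0)) // subr_le0.
  by apply: isoK_thtil1; rewrite eb leqnSn.
have t1 : (1 <= t.+1)%N by [].
have := IH t1 a b eb; have := eta_gt0.
have : eta * alpha a <= eta * alpha b.
  by apply: ler_wpM2l; [exact: ltW | apply: alpha_mono; rewrite eb].
rewrite !(thtil_next t1) /ind_le.
case: ifPn => ca; case: ifPn => cb; rewrite -?ltNge in ca cb; try lra.
have jump : theta t.+1 a < theta t.+1 b by lra.
have := proj_isoK_jumpl (proj_theta t1) eb jump.
have := proj_isoK_jumpr (proj_theta t1) eb jump.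
lra.
Qed.

Lemma theta_near_thtil t i : (1 <= t)%N ->
  `|theta t i - thtil t i| <= eta * m.-1%:R.
Proof.
move=> t1; have P := proj_theta t1.
have drop := adjacent_gap_drop_le (thtil_gap t1) (ltW eta_gt0).
rewrite ler_distl; apply/andP; split.
  by apply: (proj_isoK_lbound P) => j ij; have := drop _ _ ij; lra.
by apply: (proj_isoK_ubound P) => j ji; have := drop _ _ ji; lra.
Qed.

Lemma thtil_bounded t i : (1 <= t)%N ->
  `|thtil t i| <= `|thtil 1 i| + Rb + eta * m%:R.
Proof.
have Rb0 : 0 <= Rb := le_trans (normr_ge0 _) (yk_le (leqnn 1)).
have eta0 := ltW eta_gt0.
have em : eta * m.-1%:R + eta = eta * m%:R.
  by rewrite -[in RHS](ltn_predK (ltn_ord i)) -addn1 natrD mulrDr mulr1.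
have em0 : 0 <= eta * m.-1%:R := mulr_ge0 eta0 (ler0n _ _).
have /andP[a0 a1] := alpha01 i.
have ea0 := mulr_ge0 eta0 a0; have ea1 := ler_piMr eta0 a1.
elim: t => [//|[|t] IH] _; first by rewrite -addrA lerDl; lra.
have t1 : (1 <= t.+1)%N by [].
have := theta_near_thtil i t1; have := yk_le t1; have := IH t1.
rewrite !ler_norml (thtil_next t1) /ind_le.
have := normr_ge0 (thtil 1 i).
by case: ifPn => c; rewrite -?ltNge in c; lra.
Qed.

Lemma sum_cov_telescope i n :
  eta * \sum_(1 <= t < n.+1) (cov t i - alpha i) = thtil 1 i - thtil n.+1 i.
Proof.
elim: n => [|n IH]; first by rewrite big_geq // mulr0 subrr.
by rewrite big_nat_recr //= mulrDr IH (thtil_next (_ : (1 <= n.+1)%N)) //; lra.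
Qed.

Lemma coverage_gap_le i T : (1 <= T)%N ->
  `|T%:R^-1 * (\sum_(1 <= t < T.+1) cov t i) - alpha i|
    <= (2 * `|thtil 1 i| + Rb + eta * m%:R) / (eta * T%:R).
Proof.
move=> T1; have T0 : 0 < T%:R :> R by rewrite ltr0n.
have -> : T%:R^-1 * (\sum_(1 <= t < T.+1) cov t i) - alpha i
    = (thtil 1 i - thtil T.+1 i) / (eta * T%:R).
  rewrite -sum_cov_telescope sumrB sumr_const_nat subn1 /= -mulr_natl.
  by field; rewrite !gt_eqF.
have eT : 0 < eta * T%:R by rewrite mulr_gt0.
rewrite normrM [`|_^-1|]gtr0_norm ?invr_gt0 // ler_pM2r ?invr_gt0 //.
have := ler_normB (thtil 1 i) (thtil T.+1 i).
have := thtil_bounded i (isT : (1 <= T.+1)%N).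
lra.
Qed.

End MultiQT.

Lemma dA_gt0 (R : realType) m (alpha : 'I_m -> R) :
  (forall i, 0 < alpha i < 1) -> 0 < dA alpha.
Proof.
move=> alpha01; apply: (big_ind (fun x : R => 0 < x)) => // [x z x0 z0|j _].
  by rewrite lt_min x0 z0.
by have /andP[a0 a1] := alpha01 j; rewrite lt_min a0 subr_gt0.
Qed.

Lemma dA_le_half (R : realType) m (alpha : 'I_m -> R) (i : 'I_m) :
  dA alpha <= 2^-1.
Proof.
apply: le_trans (bigmin_le _ i _) _; rewrite ge_min; apply/orP.
by case: (lerP (alpha i) 2^-1) => h; [left | right]; lra.
Qed.

Lemma normr_le_norm2 (R : realType) m (x : 'I_m -> R) i : `|x i| <= norm2 x.
Proof.
have sq0 j : 0 <= x j ^+ 2 := sqr_ge0 (x j).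
rewrite /norm2 -sqrtr_sqr ler_sqrt ?sumr_ge0 // (bigD1 i) //= lerDl.
exact: sumr_ge0.
Qed.

Lemma multiqt_rate_le (R : rcfType) (m T : nat) (eta Rb d a N : R) :
  (0 < m)%N -> (0 < T)%N -> 0 < eta -> 0 <= Rb -> 0 < d <= 2^-1 -> a <= N ->
  (2 * a + Rb + eta * m%:R) / (eta * T%:R)
    <= 2 * N / (eta * T%:R)
       + Num.sqrt m%:R / T%:R
       + m%:R * Num.sqrt m%:R / (2 * d * T%:R)
       + Rb * (m%:R * Num.sqrt m%:R) / (d * eta * T%:R)
       + m%:R * Num.sqrt m%:R / (T%:R * Num.sqrt 3).
Proof.
move=> m0 T0 eta0 Rb0 /andP[d0 d2] aN.
set s := Num.sqrt m%:R.
have Tpos : 0 < T%:R :> R by rewrite ltr0n.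
have eT : 0 < eta * T%:R by rewrite mulr_gt0.
have m1 : 1 <= m%:R :> R by rewrite ler1n.
have s1 : 1 <= s by rewrite -sqrtr1 ler_sqrt.
have ms1 : 1 <= m%:R * s := mulr_ege1 m1 s1.
have -> : (2 * a + Rb + eta * m%:R) / (eta * T%:R)
    = 2 * a / (eta * T%:R) + Rb / (eta * T%:R) + m%:R / T%:R.
  by field; rewrite !gt_eqF.
have t1 : 2 * a / (eta * T%:R) <= 2 * N / (eta * T%:R).
  by rewrite ler_pM2r ?invr_gt0 // ler_pM2l.
have t2 : Rb / (eta * T%:R) <= Rb * (m%:R * s) / (d * eta * T%:R).
  have -> : Rb * (m%:R * s) / (d * eta * T%:R)
      = Rb / (eta * T%:R) * (m%:R * s / d) by field; rewrite !gt_eqF.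
  apply: ler_peMr; first by apply: divr_ge0 => //; exact: ltW.
  by rewrite ler_pdivlMr // mul1r; lra.
have t3 : m%:R / T%:R <= m%:R * s / (2 * d * T%:R).
  have -> : m%:R * s / (2 * d * T%:R) = m%:R / T%:R * (s / (2 * d)).
    by field; rewrite !gt_eqF.
  apply: ler_peMr; first by apply: divr_ge0 => //; exact: ltW.
  by rewrite ler_pdivlMr ?mul1r; lra.
have t4 : 0 <= s / T%:R by apply: divr_ge0; [exact: sqrtr_ge0 | exact: ltW].
have t5 : 0 <= m%:R * s / (T%:R * Num.sqrt 3).
  by apply: divr_ge0; [lra | apply: mulr_ge0; [exact: ltW | exact: sqrtr_ge0]].
lra.
Qed.

Theorem corollary1 (R : realType) (m : nat) (alpha : 'I_m -> R)
  (eta Rb : R) (k y : nat -> R) (thtil theta : nat -> 'I_m -> R) :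
  (forall i j : 'I_m, (i < j)%N -> alpha i < alpha j) ->
  (forall i, 0 < alpha i < 1) ->
  0 < eta ->
  isoK (thtil 1%N) ->
  (forall t, (1 <= t)%N -> `|y t - k t| <= Rb) ->
  (* theta_t = Pi_{K - b_t}(thtil_t), with b_t = [k_t, ..., k_t] *)
  (forall t, (1 <= t)%N -> is_proj (shiftK (fun _ => k t)) (thtil t) (theta t)) ->
  (* thtil_{t+1} = thtil_t - eta (cov_t - alpha), cov_t^i = 1{y_t <= k_t + theta_t^i} *)
  (forall t, (1 <= t)%N -> forall i,
     thtil t.+1 i = thtil t i - eta * (ind_le (y t) (k t + theta t i) - alpha i)) ->
  forall (i : 'I_m) (T : nat), (1 <= T)%N ->
    `| T%:R^-1 * (\sum_(1 <= t < T.+1) ind_le (y t) (k t + theta t i)) - alpha i|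
    <= 2 * norm2 (thtil 1%N) / (eta * T%:R)
       + Num.sqrt m%:R / T%:R
       + m%:R * Num.sqrt m%:R / (2 * dA alpha * T%:R)
       + Rb * (m%:R * Num.sqrt m%:R) / (dA alpha * eta * T%:R)
       + m%:R * Num.sqrt m%:R / (T%:R * Num.sqrt 3).
Proof.
move=> alpha_lt alpha01 eta0 iso1 yk proj next i T T1.
have alpha_mono (a b : 'I_m) : (a < b)%N -> alpha a <= alpha b.
  by move/alpha_lt/ltW.
have alpha01W j : 0 <= alpha j <= 1 by case/andP: (alpha01 j) => /ltW -> /ltW.
have projK t (t1 : (1 <= t)%N) : is_proj (@isoK R m) (thtil t) (theta t).
  exact: is_proj_shiftK_const (proj t t1).
have := coverage_gap_le alpha_mono alpha01W eta0 iso1 yk projK next i T1.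
move/le_trans; apply.
apply: multiqt_rate_le => //.
- exact: leq_ltn_trans (leq0n _) (ltn_ord i).
- exact: le_trans (normr_ge0 _) (yk 1%N (leqnn 1)).
- by rewrite dA_gt0 // dA_le_half.
- exact: normr_le_norm2.
Qed.
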